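(* Let $\lambda\ge0$. For all integers $k,m\ge1$ there exists $t$ with the following property. Let $G$ be a $\lambda$-spread digraph such that no vertex of $G$ is $(k,m)$-rich. Then $V(G)$ can be partitioned into $t$ sets $X_1,\dots,X_t$ such that for each $1\le i\le t$, either no $(m+1)$-clique of $G[X_i]$ has a source, or no $(m+1)$-clique of $G[X_i]$ has a sink.
   Context: Digraphs are finite, with no loops, parallel edges or antiparallel pairs; $G^*$ is the underlying undirected graph. $N^+(v)$, $N^-(v)$ are the out- and in-neighbourhoods of $v$. A digraph $G$ is $\lambda$-spread if for every vertex $v$ and all $A\subseteq N^+(v)$, $B\subseteq N^-(v)$ with $|A|=|B|=\lambda$, some vertex of $A$ is $G^*$-adjacent with some vertex of $B$. A $k$-clique is a clique (in $G^*$) of cardinality $k$. For a clique $X$ of $G$, a vertex of $X$ is a source of $X$ if it is adjacent to every other vertex of $X$, and a sink if it is adjacent from every other vertex of $X$. For $A,B\subseteq V(G)$, $A$ is $G^*$-complete with $B$ if $A\cap B=\emptyset$ and every vertex of $A$ is $G^*$-adjacent with every vertex of $B$. A vertex $v$ is $(k,m)$-rich if there exist $k$ pairwise disjoint $m$-cliques $A_1,\dots,A_k\subseteq N^+(v)$ and $k$ pairwise disjoint $m$-cliques $B_1,\dots,B_k\subseteq N^-(v)$ such that $A_1\cup\dots\cup A_k$ is $G^*$-complete with $B_1\cup\dots\cup B_k$. *)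

From mathcomp Require Import all_boot.
Set Implicit Arguments. Unset Strict Implicit. Unset Printing Implicit Defensive.

Section DigraphDefs.
Variable T : finType.
Variable E : rel T.

(* no loops, no antiparallel pairs (parallel edges impossible for a relation) *)
Definition is_digraph : Prop :=
  (forall v, ~~ E v v) /\ (forall u v, E u v -> ~~ E v u).

Definition adjU (u v : T) : bool := E u v || E v u.

Definition outN (v : T) : {set T} := [set u | E v u].
Definition inN (v : T) : {set T} := [set u | E u v].

Definition spread (lam : nat) : Prop :=
  forall (v : T) (A B : {set T}),
    A \subset outN v -> B \subset inN v -> #|A| = lam -> #|B| = lam ->
    exists a, exists b, [/\ a \in A, b \in B & adjU a b].

Definition clique (X : {set T}) : Prop :=
  forall u v, u \in X -> v \in X -> u != v -> adjU u v.

Definition kclique (k : nat) (X : {set T}) : Prop := clique X /\ #|X| = k.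

Definition complete (A B : {set T}) : Prop :=
  [disjoint A & B] /\ (forall a b, a \in A -> b \in B -> adjU a b).

Definition rich (k m : nat) (v : T) : Prop :=
  exists (As Bs : 'I_k -> {set T}),
    [/\ forall i, kclique m (As i) /\ As i \subset outN v,
        forall i, kclique m (Bs i) /\ Bs i \subset inN v,
        forall i j, i != j -> [disjoint As i & As j],
        forall i j, i != j -> [disjoint Bs i & Bs j]
      & complete (\bigcup_i As i) (\bigcup_i Bs i)].

Definition is_source (X : {set T}) (x : T) : Prop :=
  x \in X /\ forall y, y \in X -> y != x -> E x y.
Definition is_sink (X : {set T}) (x : T) : Prop :=
  x \in X /\ forall y, y \in X -> y != x -> E y x.

End DigraphDefs.

(* If the out- and the in-neighbourhood of v both contained many pairwise
   disjoint m-cliques, colour each pair (out-clique, in-clique) by some pair of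
   positions where they are non-adjacent, or by "complete".  A bipartite
   Ramsey argument gives a large monochromatic rectangle: a non-adjacent colour
   contradicts λ-spreadness, the colour "complete" makes v (k,m)-rich.  So on
   one side of each v the m-cliques are met by a bounded set S(v).  The
   relation u ∈ S(v) has bounded out-degree, hence admits a proper colouring
   with boundedly many colours; in a class of fixed colour and side, an
   (m+1)-clique X with a source (or sink) x on that side has X∖x met by S(x),
   producing a vertex of the colour of x inside S(x). *)

From mathcomp Require Import all_boot zify.
From Stdlib Require Import Classical.
Set Implicit Arguments. Unset Strict Implicit. Unset Printing Implicit Defensive.

Lemma exists_large_fiber (D C : finType) (g : D -> C) M :
  M.-1 * #|C| < #|D| -> exists c, M <= #|[set x | g x == c]|.
Proof.
move=> large; apply/existsP; apply: contraLR large => /existsPn small.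
rewrite -leqNgt.
have -> : #|D| = \sum_(c : C) #|[set x | g x == c]|.
  rewrite -sum1_card (partition_big g xpredT) //=.
  by apply: eq_bigr => c _; rewrite sum1dep_card.
rewrite mulnC -sum_nat_const; apply: leq_sum => c _.
by have := small c; rewrite -ltnNge; lia.
Qed.

Lemma monochromatic_rectangle (I J K : finType) (f : I -> J -> K) M :
  M.-1 * #|K| < #|I| -> M.-1 * #|K| ^ #|I| < #|J| ->
  exists c (R : {set I}) (C : {set J}),
    [/\ M <= #|R|, M <= #|C| & forall i j, i \in R -> j \in C -> f i j = c].
Proof.
move=> largeI largeJ.
have [col colC] : exists col, M <= #|[set j | [ffun i => f i j] == col]|.
  by apply: exists_large_fiber; rewrite card_ffun.
have [c cR] : exists c, M <= #|[set i | col i == c]| by exact: exists_large_fiber.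
exists c, [set i | col i == c], [set j | [ffun i => f i j] == col]; split=> // i j.
by rewrite !inE => /eqP <- /eqP <-; rewrite ffunE.
Qed.

Lemma exists_subset_card (I : finType) (A : {set I}) n :
  n <= #|A| -> exists2 B : {set I}, B \subset A & #|B| = n.
Proof.
move=> /card_geqP[s [s_uniq s_size sA]]; exists [set x in s].
  by apply/subsetP => x; rewrite inE; exact: sA.
by rewrite cardsE (card_uniqP s_uniq).
Qed.

Lemma exists_inj_ord (I : finType) (A : {set I}) k :
  k <= #|A| -> exists2 h : 'I_k -> I, injective h & forall i, h i \in A.
Proof.
move=> kA; exists (fun i => enum_val (widen_ord kA i)) => [i j|i]; last exact: enum_valP.
by move=> /enum_val_inj/(congr1 val)/=/val_inj.
Qed.

Lemma cards_in_sum (T : finType) (A : {set T}) (P : pred T) :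
  #|[set u in A | P u]| = \sum_(u in A) P u.
Proof.
rewrite -sum1_card (eq_bigl (fun u => (u \in A) && P u)) => [|u]; last by rewrite inE.
by rewrite big_mkcondr; apply: eq_bigr => u _; case: (P u).
Qed.

Section CliquePacking.
Variables (T : finType) (E : rel T) (m : nat).

Definition kclique_packing (I : finType) (F : I -> {set T}) (U : {set T}) :=
  (forall i, kclique E m (F i) /\ F i \subset U) /\
  (forall i j, i != j -> [disjoint F i & F j]).

Definition kclique_transversal (S U : {set T}) :=
  forall X, kclique E m X -> X \subset U -> exists2 y, y \in X & y \in S.

Lemma kclique_packing_or_transversal p U :
  (exists F : 'I_p.+1 -> {set T}, kclique_packing F U) \/
  (exists S : {set T}, [/\ S \subset U, #|S| <= p * m & kclique_transversal S U]).
Proof.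
elim: p U => [|p IH] U;
  have [[X [cX XU]]|noX] := classic (exists X, kclique E m X /\ X \subset U);
  try by right; exists set0; rewrite sub0set cards0; split=> // Y cY YU;
         case: noX; exists Y.
  by left; exists (fun=> X); split=> // i j; rewrite !ord1.
have [[F [FU Fdisj]]|[S [SU Scard Shits]]] := IH (U :\: X).
  have disjFX j : [disjoint F j & X] by have [_ /subsetDP[]] := FU j.
  left; exists (fun i => if unlift ord0 i is Some j then F j else X); split.
    move=> i; case: unliftP => [j _|_] //.
    by have [cFj /subsetDP[FjU _]] := FU j.
  move=> i j; case: unliftP => [i' ->|->]; case: unliftP => [j' ->|->] //.
  - by move=> ij; apply: Fdisj; apply: contra ij => /eqP ->.
  - by rewrite disjoint_sym.
right; exists (S :|: X); split.
- by rewrite subUset XU (subset_trans SU) ?subsetDl.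
- by have := cardsU S X; have [_ ->] := cX; rewrite mulSn; lia.
move=> Y cY YU.
have [/exists_inP[y yY yX]|/exists_inPn YnX] := boolP [exists y in Y, y \in X].
  by exists y; rewrite // inE yX orbT.
have [|y yY yS] := Shits Y cY.
  by apply/subsetDP; split=> //; rewrite disjoint_subset; apply/subsetP => y /YnX.
by exists y; rewrite // inE yS.
Qed.

End CliquePacking.

Section DegenerateColouring.
Variables (T : finType) (S : T -> {set T}) (s : nat).
Hypothesis card_S : forall v, #|S v| <= s.
Hypothesis notin_S : forall v, v \notin S v.

Lemma exists_low_degree (W : {set T}) : W != set0 ->
  exists2 w, w \in W & #|[set u in W | (u \in S w) || (w \in S u)]| <= s.*2.
Proof.
move=> W0; apply/exists_inP; apply: contraR W0 => /exists_inPn high.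
have out_deg : \sum_(w in W) #|[set u in W | u \in S w]| <= #|W| * s.
  rewrite -sum_nat_const; apply: leq_sum => w _.
  by apply: leq_trans (card_S w); apply/subset_leq_card/subsetP => u /setIdP[].
have in_deg : \sum_(w in W) #|[set u in W | w \in S u]| <= #|W| * s.
  under eq_bigr => w _ do rewrite cards_in_sum.
  rewrite exchange_big /= -sum_nat_const; apply: leq_sum => u _.
  rewrite -(cards_in_sum W (mem (S u))).
  by apply: leq_trans (card_S u); apply/subset_leq_card/subsetP => w /setIdP[].
have deg : \sum_(w in W) s.*2.+1 <=
    \sum_(w in W) (#|[set u in W | u \in S w]| + #|[set u in W | w \in S u]|).
  apply: leq_sum => w wW; have := high w wW; rewrite -ltnNge => /leq_trans; apply.
  rewrite (_ : [set u in W | _] =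
    [set u in W | u \in S w] :|: [set u in W | w \in S u]).
    exact: leq_card_setU.
  by apply/setP => u; rewrite !inE andb_orr.
rewrite big_split /= sum_nat_const in deg.
by rewrite -cards_eq0 -leqn0; lia.
Qed.

Lemma proper_colouring_on n (W : {set T}) : #|W| <= n ->
  exists g : T -> 'I_s.*2.+1,
    forall u v, u \in W -> v \in W -> u \in S v -> g u != g v.
Proof.
elim: n W => [|n IH] W cardW; have [->|W0] := eqVneq W set0;
  try by exists (fun=> ord0) => u v; rewrite inE.
  by move: cardW; rewrite leqn0 cards_eq0 (negbTE W0).
have [w wW w_low] := exists_low_degree W0.
set Nw := [set u in W | _] in w_low.
have [g g_proper] : exists g : T -> 'I_s.*2.+1,
    forall u v, u \in W :\ w -> v \in W :\ w -> u \in S v -> g u != g v.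
  by apply: IH; have := cardsD1 w W; rewrite wW; lia.
have /subsetPn[c _ c_free] : ~~ ([set: 'I_s.*2.+1] \subset g @: Nw).
  apply/negP => /subset_leq_card; rewrite cardsT card_ord leqNgt ltnS.
  by rewrite (leq_trans (leq_imset_card g Nw)).
exists (fun x => if x == w then c else g x) => u v uW vW uSv.
have nbr x : x \in W -> (x \in S w) || (w \in S x) -> g x \in g @: Nw.
  by move=> xW xw; apply: imset_f; rewrite inE xW.
case: (eqVneq u w) => [uw|uw]; case: (eqVneq v w) => [vw|vw].
- by move: uSv; rewrite uw vw (negbTE (notin_S w)).
- by apply: contraNneq c_free => ->; apply: nbr; rewrite // -uw uSv orbT.
- by apply: contraNneq c_free => <-; apply: nbr; rewrite // -vw uSv.
- by apply: g_proper; rewrite // !inE ?uw ?vw.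
Qed.

Lemma proper_colouring :
  exists g : T -> 'I_s.*2.+1, forall u v, u \in S v -> g u != g v.
Proof.
have [g g_proper] := @proper_colouring_on #|[set: T]| [set: T] (leqnn _).
by exists g => u v; apply: g_proper; rewrite inE.
Qed.

End DegenerateColouring.

Section CliqueElements.
Variables (T : finType) (E : rel T) (m : nat).

Definition clique_elt (x0 : T) (X : {set T}) (j : 'I_m) : T := nth x0 (enum X) j.

Lemma clique_elt_mem x0 (X : {set T}) j : #|X| = m -> clique_elt x0 X j \in X.
Proof. by move=> Xm; rewrite /clique_elt -mem_enum mem_nth // -cardE Xm. Qed.

Lemma clique_eltP x0 (X : {set T}) x :
  #|X| = m -> x \in X -> exists j, clique_elt x0 X j = x.
Proof.
move=> Xm xX; have xm : index x (enum X) < m by rewrite -Xm cardE index_mem mem_enum.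
by exists (Ordinal xm); rewrite /clique_elt nth_index // mem_enum.
Qed.

Definition nonadjacent_pair x0 (A B : {set T}) : option ('I_m * 'I_m) :=
  [pick pq : 'I_m * 'I_m | ~~ adjU E (clique_elt x0 A pq.1) (clique_elt x0 B pq.2)].

Lemma nonadjacent_pair_Some x0 (A B : {set T}) p q :
  nonadjacent_pair x0 A B = Some (p, q) ->
  ~~ adjU E (clique_elt x0 A p) (clique_elt x0 B q).
Proof. by rewrite /nonadjacent_pair; case: pickP => // -[p' q'] nadj [<- <-]. Qed.

Lemma nonadjacent_pair_None x0 (A B : {set T}) a b : #|A| = m -> #|B| = m ->
  nonadjacent_pair x0 A B = None -> a \in A -> b \in B -> adjU E a b.
Proof.
move=> Am Bm; rewrite /nonadjacent_pair; case: pickP => // all_adj _ aA bB.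
have [[p <-] [q <-]] := (clique_eltP x0 Am aA, clique_eltP x0 Bm bB).
exact: negbFE (all_adj (p, q)).
Qed.

End CliqueElements.

Definition dir_nbh (T : finType) (E : rel T) (b : bool) (v : T) : {set T} :=
  if b then outN E v else inN E v.

(* p.+1 and n.+1 disjoint m-cliques on the two sides suffice for richness
   (rich_of_large_packings); a failed packing leaves a transversal of size at
   most p * m, resp. n * m. *)
Definition transversal_bound (lam k m : nat) : nat :=
  let p := maxn k lam * (m * m).+1 in
  let n := maxn k lam * (m * m).+1 ^ p.+1 in (p + n) * m.

Section RichVertex.
Variables (T : finType) (E : rel T) (lam k m : nat).
Hypothesis digraphE : is_digraph E.
Hypothesis spreadE : spread E lam.

Lemma disjoint_outN_inN v : [disjoint outN E v & inN E v].
Proof.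
rewrite disjoint_subset; apply/subsetP => x; rewrite !inE => vx.
exact: digraphE.2 _ _ vx.
Qed.

Lemma spread_adjacent v (A B : {set T}) :
  A \subset outN E v -> B \subset inN E v -> lam <= #|A| -> lam <= #|B| ->
  exists a b, [/\ a \in A, b \in B & adjU E a b].
Proof.
move=> Aout Bin /exists_subset_card[A' A'A A'lam] /exists_subset_card[B' B'B B'lam].
have [a [b [aA' bB' ab]]] :=
  spreadE (subset_trans A'A Aout) (subset_trans B'B Bin) A'lam B'lam.
by exists a, b; split=> //; [exact: subsetP A'A a aA' | exact: subsetP B'B b bB'].
Qed.

Lemma packing_elt_inj (I : finType) (F : I -> {set T}) U x0 (p : 'I_m) :
  kclique_packing E m F U -> injective (fun i => clique_elt x0 (F i) p).
Proof.
move=> [Fc Fdisj] i j eq_ij; apply/eqP/negPn/negP => ij.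
have [[_ Fim] _] := Fc i; have [[_ Fjm] _] := Fc j.
have := disjointFr (Fdisj i j ij) (clique_elt_mem x0 p Fim).
by rewrite eq_ij clique_elt_mem.
Qed.

Lemma packings_adjacent_at v (I J : finType) (A : I -> {set T}) (B : J -> {set T})
    (R : {set I}) (C : {set J}) (p q : 'I_m) :
  kclique_packing E m A (outN E v) -> kclique_packing E m B (inN E v) ->
  lam <= #|R| -> lam <= #|C| ->
  exists i j, [/\ i \in R, j \in C &
                  adjU E (clique_elt v (A i) p) (clique_elt v (B j) q)].
Proof.
move=> Apack Bpack Rlam Clam.
have Aout : [set clique_elt v (A i) p | i in R] \subset outN E v.
  apply/subsetP => _ /imsetP[i _ ->]; have [[_ Aim] AiU] := Apack.1 i.
  exact: subsetP AiU _ (clique_elt_mem v p Aim).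
have Bin : [set clique_elt v (B j) q | j in C] \subset inN E v.
  apply/subsetP => _ /imsetP[j _ ->]; have [[_ Bjm] BjU] := Bpack.1 j.
  exact: subsetP BjU _ (clique_elt_mem v q Bjm).
have Acard : lam <= #|[set clique_elt v (A i) p | i in R]|.
  by rewrite card_imset //; exact: packing_elt_inj Apack.
have Bcard : lam <= #|[set clique_elt v (B j) q | j in C]|.
  by rewrite card_imset //; exact: packing_elt_inj Bpack.
have [a [b [/imsetP[i iR ->] /imsetP[j jC ->] ab]]] :=
  spread_adjacent Aout Bin Acard Bcard.
by exists i, j.
Qed.

Lemma rich_of_complete_packings v (I J : finType) (A : I -> {set T}) (B : J -> {set T})
    (R : {set I}) (C : {set J}) :
  kclique_packing E m A (outN E v) -> kclique_packing E m B (inN E v) ->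
  k <= #|R| -> k <= #|C| ->
  (forall i j a b, i \in R -> j \in C -> a \in A i -> b \in B j -> adjU E a b) ->
  rich E k m v.
Proof.
move=> [Ac Adisj] [Bc Bdisj].
move=> /exists_inj_ord[hR hR_inj hRR] /exists_inj_ord[hC hC_inj hCC] RC.
exists (A \o hR), (B \o hC); split=> [i|j|i j ij|i j ij|]; rewrite ?(Ac, Bc) //=.
- by apply: Adisj; rewrite (inj_eq hR_inj).
- by apply: Bdisj; rewrite (inj_eq hC_inj).
split.
  apply: disjointW (disjoint_outN_inN v); apply/bigcupsP => i _.
  - exact: (Ac _).2.
  - exact: (Bc _).2.
move=> a b /bigcupP[i _ aA] /bigcupP[j _ bB]; exact: RC aA bB.
Qed.

Lemma rich_of_large_packings v (I J : finType) (A : I -> {set T}) (B : J -> {set T}) :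
  kclique_packing E m A (outN E v) -> kclique_packing E m B (inN E v) ->
  (maxn k lam).-1 * (m * m).+1 < #|I| ->
  (maxn k lam).-1 * (m * m).+1 ^ #|I| < #|J| ->
  rich E k m v.
Proof.
have -> : (m * m).+1 = #|{: option ('I_m * 'I_m)}|.
  by rewrite card_option card_prod card_ord.
move=> Apack Bpack largeI largeJ.
have [c [R [C [Rlarge Clarge mono]]]] :=
  monochromatic_rectangle (fun i j => nonadjacent_pair E m v (A i) (B j)) largeI largeJ.
case: c mono => [[p q]|] mono.
  have [i [j [iR jC ab]]] := packings_adjacent_at p q Apack Bpack
    (leq_trans (leq_maxr _ _) Rlarge) (leq_trans (leq_maxr _ _) Clarge).
  by have := nonadjacent_pair_Some (mono i j iR jC); rewrite ab.
apply: (rich_of_complete_packings Apack Bpack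
  (leq_trans (leq_maxl _ _) Rlarge) (leq_trans (leq_maxl _ _) Clarge)).
move=> i j a b iR jC; have [[_ Aim] _] := Apack.1 i; have [[_ Bjm] _] := Bpack.1 j.
exact: nonadjacent_pair_None Aim Bjm (mono i j iR jC).
Qed.

Lemma not_rich_transversal v : ~ rich E k m v ->
  exists b (S : {set T}), [/\ S \subset dir_nbh E b v, #|S| <= transversal_bound lam k m
                 & kclique_transversal E m S (dir_nbh E b v)].
Proof.
move=> not_rich; rewrite /transversal_bound /=.
set p := maxn k lam * _; set n := maxn k lam * _ ^ _.
have [[A Apack]|[S [SU Scard Shits]]] :=
  kclique_packing_or_transversal E m p (outN E v); last first.
  exists true, S; split=> //.
  by apply: leq_trans Scard _; rewrite leq_mul2r leq_addr orbT.
have [[B Bpack]|[S [SU Scard Shits]]] :=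
  kclique_packing_or_transversal E m n (inN E v); last first.
  exists false, S; split=> //.
  by apply: leq_trans Scard _; rewrite leq_mul2r leq_addl orbT.
exfalso; apply/not_rich/(rich_of_large_packings Apack Bpack);
  by rewrite !card_ord ltnS leq_mul2r leq_pred orbT.
Qed.

End RichVertex.

Section Apex.
Variables (T : finType) (E : rel T) (m : nat).

Lemma kclique_setD1 (X : {set T}) x :
  kclique E m.+1 X -> x \in X -> kclique E m (X :\ x).
Proof.
move=> [cX cardX] xX; split; last by have := cardsD1 x X; rewrite xX cardX => -[].
by move=> u w /setD1P[_ uX] /setD1P[_ wX]; exact: cX.
Qed.

Lemma source_outN (X : {set T}) x : is_source E X x -> X :\ x \subset outN E x.
Proof. by move=> [_ src]; apply/subsetP => y /setD1P[yx yX]; rewrite inE src. Qed.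

Lemma sink_inN (X : {set T}) x : is_sink E X x -> X :\ x \subset inN E x.
Proof. by move=> [_ snk]; apply/subsetP => y /setD1P[yx yX]; rewrite inE snk. Qed.

Lemma notin_dir_nbh : is_digraph E -> forall b v, v \notin dir_nbh E b v.
Proof. by move=> [noloop _] [] v; rewrite inE noloop. Qed.

End Apex.

Theorem theorem3p2 (lam : nat) :
  forall k m : nat, 1 <= k -> 1 <= m ->
  exists t : nat,
    forall (T : finType) (E : rel T),
      is_digraph E -> spread E lam -> (forall v, ~ rich E k m v) ->
      exists f : T -> 'I_t,
        forall i : 'I_t,
          (forall X : {set T}, X \subset [set x | f x == i] ->
             kclique E m.+1 X -> forall x, ~ is_source E X x)
          \/
          (forall X : {set T}, X \subset [set x | f x == i] ->
             kclique E m.+1 X -> forall x, ~ is_sink E X x).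
Proof.
move=> k m _ _; set s := transversal_bound lam k m.
exists #|{: bool * 'I_s.*2.+1}| => T E digraphE spreadE not_rich.
have [side side_spec] :=
  fin_all_exists (fun v => not_rich_transversal digraphE spreadE (not_rich v)).
have [S S_spec] := fin_all_exists side_spec.
have S_card v : #|S v| <= s by case: (S_spec v).
have notin_S v : v \notin S v.
  have [S_nbh _ _] := S_spec v.
  exact: contra (subsetP S_nbh v) (notin_dir_nbh digraphE _ _).
have [g g_proper] := proper_colouring S_card notin_S.
pose f v := enum_rank (side v, g v).
exists f => i; set class := [set x | f x == i].
have class_val y : y \in class -> (side y, g y) = enum_val i.
  by rewrite inE => /eqP <-; rewrite enum_rankK.
have no_apex (X : {set T}) x : X \subset class -> kclique E m.+1 X -> x \in X ->
    X :\ x \subset dir_nbh E (side x) x -> False.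
  move=> Xi cX xX Xx_nbh; have [_ _ S_hits] := S_spec x.
  have [y /setD1P[_ yX] ySx] := S_hits _ (kclique_setD1 cX xX) Xx_nbh.
  have := class_val y (subsetP Xi y yX); rewrite -(class_val x (subsetP Xi x xX)).
  by move=> -[_ gyx]; move: (g_proper y x ySx); rewrite gyx eqxx.
case Ei: (enum_val i) => [b c].
have side_class x : x \in class -> side x = b by move=> /class_val; rewrite Ei => -[].
case: b {Ei} side_class => side_class; [left|right] => X Xi cX x apex;
  apply: (no_apex X x Xi cX apex.1); rewrite side_class ?(subsetP Xi _ apex.1) //.
- exact: source_outN.
- exact: sink_inN.
Qed.
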